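(* Let $m\ge2$. The problem $-\psi''+Q\psi=0$ on $\Omega$, $\psi\in H^2(\Omega)\cap K(\Omega)$, admits $m$ linearly independent solutions if and only if at least $m+1$ of the $n$ problems \[ -z''+Qz=0\ \text{on}\ \omega_i,\qquad z(a)=0,\qquad \frac{\mathrm dz}{\mathrm d\omega_i}(a_i)=0,\qquad i=1,\dots,n, \] have nontrivial solutions.
   Context: $\Omega$ is a compact star graph with $n$ edges $\omega_i=[0,a_i]$, $a_i>0$, joined at a central vertex $a$ (corresponding to $0$); $a_i$ also denotes the free endpoint of $\omega_i$. Functions on $\Omega$ are tuples $(\psi_{\omega_1},\dots,\psi_{\omega_n})$, $H^2(\Omega)=\bigoplus_iH^2(0,a_i)$, $\frac{\mathrm dz}{\mathrm d\omega_i}(a_i):=z'_{\omega_i}(a_i)$, and on a single edge $z(a)$ means $z_{\omega_i}(0)$. $K(\Omega)$ is the set of functions satisfying the Kirchhoff conditions at $a$ ($\psi_{\omega_1}(0)=\dots=\psi_{\omega_n}(0)$, $\sum_i\psi'_{\omega_i}(0)=0$) and the Neumann conditions $\psi'_{\omega_j}(a_j)=0$ at every endpoint. $Q\in L^\infty(\Omega)$ is real-valued. *)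

From Stdlib Require Import Reals.
Open Scope R_scope.

Fixpoint sumR (f : nat -> R) (n : nat) : R :=
  match n with O => 0 | S k => sumR f k + f k end.

Definition outer_le (E : R -> Prop) (eps : R) : Prop :=
  exists l r : nat -> R,
    (forall k, l k <= r k) /\
    (forall x, E x -> exists k, l k < x < r k) /\
    (forall K, sumR (fun k => r k - l k) K <= eps).

Definition null_set (E : R -> Prop) : Prop :=
  forall eps, 0 < eps -> outer_le E eps.

Definition open_set (G : R -> Prop) : Prop :=
  forall x, G x -> exists r, 0 < r /\ forall y, Rabs (y - x) < r -> G y.

Definition leb_measurable (E : R -> Prop) : Prop :=
  forall eps, 0 < eps ->
    exists G, open_set G /\ (forall x, E x -> G x) /\
              outer_le (fun x => G x /\ ~ E x) eps.

(* f restricted to [0,a] is Lebesgue measurable and essentially bounded: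
   (the restriction of) f is in L^infinity(0,a) *)
Definition Linf_on (a : R) (f : R -> R) : Prop :=
  (forall c, leb_measurable (fun x => 0 <= x <= a /\ c < f x)) /\
  (exists M, null_set (fun x => 0 <= x <= a /\ M < Rabs (f x))).

(* f has derivative l at x relative to [lo,hi] (one-sided at endpoints) *)
Definition has_deriv_within (lo hi : R) (f : R -> R) (x l : R) : Prop :=
  forall eps, 0 < eps -> exists delta, 0 < delta /\
    forall y, lo <= y <= hi -> y <> x -> Rabs (y - x) < delta ->
      Rabs ((f y - f x) / (y - x) - l) < eps.

Definition abs_cont_on (lo hi : R) (f : R -> R) : Prop :=
  forall eps, 0 < eps -> exists delta, 0 < delta /\
    forall (N : nat) (l r : nat -> R),
      (forall k, (k < N)%nat -> lo <= l k <= r k /\ r k <= hi) ->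
      (forall k, (S k < N)%nat -> r k <= l (S k)) ->
      sumR (fun k => r k - l k) N < delta ->
      sumR (fun k => Rabs (f (r k) - f (l k))) N < eps.

(* z (continuous representative) lies in H^2(0,a), with derivative dz on
   [0,a], and solves -z'' + q z = 0 a.e. on (0,a):
   z is C^1 on [0,a] with derivative dz, dz is absolutely continuous, and
   dz' = q z almost everywhere. *)
Definition edge_sol (q : R -> R) (a : R) (z dz : R -> R) : Prop :=
  (forall x, 0 <= x <= a -> has_deriv_within 0 a z x (dz x)) /\
  abs_cont_on 0 a dz /\
  null_set (fun x => 0 <= x <= a /\ ~ has_deriv_within 0 a dz x (q x * z x)).

(* psi (edges psi i, i < n) is in H^2(Omega) /\ K(Omega) and solves
   -psi'' + Q psi = 0 on the star graph *)
Definition graph_sol (n : nat) (a : nat -> R) (Q : nat -> R -> R)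
    (psi : nat -> R -> R) : Prop :=
  exists dpsi : nat -> R -> R,
    (forall i, (i < n)%nat -> edge_sol (Q i) (a i) (psi i) (dpsi i)) /\
    (forall i j, (i < n)%nat -> (j < n)%nat -> psi i 0 = psi j 0) /\
    sumR (fun i => dpsi i 0) n = 0 /\
    (forall j, (j < n)%nat -> dpsi j (a j) = 0).

(* the edge problem on omega_i: -z''+Qz=0, z(a)=0, z'(a_i)=0, has a
   nontrivial solution *)
Definition edge_problem_nontrivial (q : R -> R) (a : R) : Prop :=
  exists z dz, edge_sol q a z dz /\ z 0 = 0 /\ dz a = 0 /\
    exists x, 0 <= x <= a /\ z x <> 0.

Definition lin_indep (n : nat) (a : nat -> R) (m : nat)
    (psis : nat -> nat -> R -> R) : Prop :=
  forall c : nat -> R,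
    (forall i x, (i < n)%nat -> 0 <= x <= a i ->
       sumR (fun k => c k * psis k i x) m = 0) ->
    forall k, (k < m)%nat -> c k = 0.

From Stdlib Require Import Reals Lra Lia Classical FunctionalExtensionality.
Open Scope R_scope.

(* Everything rests on one analytic fact: a solution of
   [-z'' + q z = 0] on an edge, with [q] essentially bounded, whose value and derivative vanish
   at one point vanishes identically (section CauchyUniqueness).  It is proved from scratch:
   Cousin's lemma gives mean value inequalities, both for everywhere differentiable functions
   and for absolutely continuous functions differentiable off a null set; a contraction
   argument on short windows then spreads a zero of the Cauchy data along the edge.
   Two consequences drive the graph argument: on an edge with a nontrivial Dirichlet-Neumann
   problem every Neumann solution vanishes at the centre, while on the other edges a Neumann
   solution vanishing at the centre is zero.  Hence a graph solution vanishing at the centre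
   and at the free ends of all nontrivial edges but one is zero (graph_sol_zero).
   (=>) If at most [m] edges are nontrivial, solving a homogeneous linear system with fewer
        equations than unknowns produces a nonzero combination of the [m] solutions meeting
        those vanishing conditions, contradicting independence.
   (<=) Solutions of [m + 1] nontrivial edge problems, extended by zero, fail only the
        Kirchhoff condition, a single linear constraint; eliminating it with a pivot leaves
        [m] independent graph solutions. *)

Lemma sumR_ext f g n : (forall k, (k < n)%nat -> f k = g k) -> sumR f n = sumR g n.
Proof.
  induction n as [|n IH]; simpl; intros H; auto.
  rewrite IH by (intros; apply H; lia). rewrite H by lia. reflexivity.
Qed.

Lemma sumR_plus f g n : sumR (fun k => f k + g k) n = sumR f n + sumR g n.
Proof. induction n as [|n IH]; simpl; [lra|]. rewrite IH; ring. Qed.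

Lemma sumR_scal c f n : sumR (fun k => c * f k) n = c * sumR f n.
Proof. induction n as [|n IH]; simpl; [ring|]. rewrite IH; ring. Qed.

Lemma sumR_le f g n : (forall k, (k < n)%nat -> f k <= g k) -> sumR f n <= sumR g n.
Proof.
  induction n as [|n IH]; simpl; intros H; [lra|].
  assert (sumR f n <= sumR g n) by (apply IH; intros; apply H; lia).
  assert (f n <= g n) by (apply H; lia). lra.
Qed.

Lemma sumR_zero f n : (forall k, (k < n)%nat -> f k = 0) -> sumR f n = 0.
Proof.
  induction n as [|n IH]; simpl; intros H; [lra|].
  rewrite IH by (intros; apply H; lia). rewrite H by lia. ring.
Qed.

Lemma sumR_single f n p : (p < n)%nat ->
  (forall k, (k < n)%nat -> k <> p -> f k = 0) -> sumR f n = f p.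
Proof.
  induction n as [|n IH]; simpl; intros Hp H; [lia|].
  destruct (Nat.eq_dec p n) as [->|Hne].
  - rewrite sumR_zero; [ring|]. intros; apply H; lia.
  - rewrite IH by (try lia; intros; apply H; lia). rewrite (H n) by lia. ring.
Qed.

Lemma sumR_swap (F : nat -> nat -> R) n m :
  sumR (fun i => sumR (fun k => F i k) m) n = sumR (fun k => sumR (fun i => F i k) n) m.
Proof.
  induction n as [|n IH]; simpl.
  - symmetry; apply sumR_zero; auto.
  - rewrite IH, <- sumR_plus. reflexivity.
Qed.

Lemma sumR_mono_n f n n' : (forall k, 0 <= f k) -> (n <= n')%nat -> sumR f n <= sumR f n'.
Proof. intros H Hn. induction Hn as [|n' _ IH]; simpl; [lra|]. specialize (H n'). lra. Qed.

Definition kron (j k : nat) : R := if (k =? j)%nat then 1 else 0.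

Lemma sumR_kron j n g : (j < n)%nat -> sumR (fun k => kron j k * g k) n = g j.
Proof.
  intros Hj. rewrite (sumR_single _ _ j Hj).
  - unfold kron. rewrite Nat.eqb_refl. ring.
  - intros k _ Hk. unfold kron. rewrite (proj2 (Nat.eqb_neq k j) Hk). ring.
Qed.

Lemma finite_choice {A} (d : A) (P : nat -> A -> Prop) n :
  (forall i, (i < n)%nat -> exists y, P i y) ->
  exists F : nat -> A, forall i, (i < n)%nat -> P i (F i).
Proof.
  induction n as [|n IH]; intros H.
  - exists (fun _ => d); intros; lia.
  - destruct IH as [F HF]; [intros; apply H; lia|].
    destruct (H n ltac:(lia)) as [y Hy].
    exists (fun i => if (i =? n)%nat then y else F i).
    intros i Hi. destruct (Nat.eqb_spec i n) as [->|Hne]; auto. apply HF; lia.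
Qed.

Lemma finite_nat_bound (h : nat -> nat) p : exists K, forall i, (i < p)%nat -> (h i < K)%nat.
Proof.
  induction p as [|p [K H]]; [exists 0%nat; intros; lia|].
  exists (Nat.max K (S (h p))). intros i Hi.
  destruct (Nat.eq_dec i p) as [->|]; [lia|]. specialize (H i ltac:(lia)); lia.
Qed.

Lemma finite_enumeration (P : nat -> Prop) n : exists d (g : nat -> nat),
  (forall j, (j < d)%nat -> (g j < n)%nat /\ P (g j)) /\
  (forall j l, (j < d)%nat -> (l < d)%nat -> g j = g l -> j = l) /\
  (forall i, (i < n)%nat -> P i -> exists j, (j < d)%nat /\ g j = i).
Proof.
  induction n as [|n [d [g [Hrange [Hinj Hall]]]]].
  - exists 0%nat, (fun _ => 0%nat). split; [|split]; intros; lia.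
  - destruct (classic (P n)) as [Pn|Pn].
    + exists (S d), (fun j => if (j =? d)%nat then n else g j). split; [|split].
      * intros j Hj. destruct (Nat.eqb_spec j d); [split; [lia|auto]|].
        specialize (Hrange j ltac:(lia)). split; [lia|tauto].
      * intros j l Hj Hl. destruct (Nat.eqb_spec j d), (Nat.eqb_spec l d); intros E; try lia.
        -- specialize (Hrange l ltac:(lia)); lia.
        -- specialize (Hrange j ltac:(lia)); lia.
        -- apply Hinj; lia.
      * intros i Hi Pi. destruct (Nat.eq_dec i n) as [->|Hne].
        -- exists d. rewrite Nat.eqb_refl. split; auto.
        -- destruct (Hall i ltac:(lia) Pi) as [j [Hj Hg]].
           exists j. destruct (Nat.eqb_spec j d); [lia|]. split; auto.
    + exists d, g. split; [|split]; auto.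
      * intros j Hj. specialize (Hrange j Hj). split; [lia|tauto].
      * intros i Hi Pi. destruct (Nat.eq_dec i n) as [->|]; [contradiction|]. apply Hall; auto; lia.
Qed.

Definition skip (j r : nat) : nat := if (r <? j)%nat then r else S r.

Lemma skip_lt j r m : (r < m)%nat -> (skip j r < S m)%nat.
Proof. unfold skip; destruct (Nat.ltb_spec r j); lia. Qed.

Lemma skip_neq j r : skip j r <> j.
Proof. unfold skip; destruct (Nat.ltb_spec r j); lia. Qed.

Lemma skip_inj j r r' : skip j r = skip j r' -> r = r'.
Proof. unfold skip; destruct (Nat.ltb_spec r j), (Nat.ltb_spec r' j); lia. Qed.

Lemma skip_onto j i d : (j < S d)%nat -> (i < S d)%nat -> i <> j ->
  exists r, (r < d)%nat /\ skip j r = i.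
Proof.
  intros Hj Hi Hij. unfold skip. destruct (Nat.ltb_spec i j).
  - exists i. rewrite (proj2 (Nat.ltb_lt i j)) by lia. split; [lia|auto].
  - exists (pred i). destruct (Nat.ltb_spec (pred i) j); split; lia.
Qed.

(* A homogeneous linear system with fewer equations ([d]) than unknowns ([m])
   has a nontrivial solution; proved by Gaussian elimination of the last unknown. *)
Lemma homogeneous_system_nontrivial m : forall d (v : nat -> nat -> R), (d < m)%nat ->
  exists c : nat -> R, (exists k, (k < m)%nat /\ c k <> 0) /\
    forall j, (j < d)%nat -> sumR (fun k => c k * v k j) m = 0.
Proof.
  induction m as [|m IH]; intros d v Hd; [lia|].
  destruct (classic (forall j, (j < d)%nat -> v m j = 0)) as [Hlast|Hlast].
  { exists (kron m). split.
    - exists m. unfold kron. rewrite Nat.eqb_refl. split; [lia|lra].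
    - intros j Hj. rewrite sumR_kron by lia. auto. }
  destruct (not_all_ex_not _ _ Hlast) as [j0 Hj0].
  apply imply_to_and in Hj0. destruct Hj0 as [Hj0d Hpivot].
  destruct d as [|d]; [lia|].
  set (p := v m j0) in Hpivot.
  (* eliminate the last unknown using equation [j0] *)
  destruct (IH d (fun k r => v k (skip j0 r) - v k j0 / p * v m (skip j0 r)) ltac:(lia))
    as [c' [[k0 [Hk0 Hc0]] Hc']].
  set (T := fun j => sumR (fun k => c' k * v k j) m).
  exists (fun k => if (k <? m)%nat then c' k else - T j0 / p). split.
  - exists k0. rewrite (proj2 (Nat.ltb_lt k0 m) Hk0). split; [lia|auto].
  - intros j Hj. simpl. rewrite Nat.ltb_irrefl.
    rewrite (sumR_ext _ (fun k => c' k * v k j)).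
    2:{ intros k Hk. rewrite (proj2 (Nat.ltb_lt k m) Hk). auto. }
    fold (T j). destruct (Nat.eq_dec j j0) as [->|Hne]; [fold p; field; auto|].
    destruct (skip_onto j0 j d Hj0d Hj Hne) as [r [Hr Hskip]].
    specialize (Hc' r Hr). cbv beta in Hc'. rewrite Hskip in Hc'.
    rewrite (sumR_ext _ (fun k => c' k * v k j + (- v m j / p) * (c' k * v k j0))) in Hc'
      by (intros; field; auto).
    rewrite sumR_plus, sumR_scal in Hc'. fold (T j) (T j0) in Hc'.
    replace (- T j0 / p * v m j) with (- v m j / p * T j0) by (field; auto). lra.
Qed.

(** * Null sets *)

Lemma null_subset (E F : R -> Prop) : null_set F -> (forall x, E x -> F x) -> null_set E.
Proof.
  intros HF HEF eps He. destruct (HF eps He) as [l [r [H1 [H2 H3]]]].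
  exists l, r; repeat split; auto.
Qed.

Lemma sumR_interleave (f g : nat -> R) K :
  sumR (fun k => if Nat.even k then f (Nat.div2 k) else g (Nat.div2 k)) (2 * K) = sumR f K + sumR g K.
Proof.
  induction K as [|K IH]; [simpl; lra|].
  replace (2 * S K)%nat with (S (S (2 * K))) by lia.
  change (sumR ?F (S (S ?n))) with (sumR F n + F n + F (S n)).
  rewrite IH, Nat.even_succ, Nat.odd_mul, Nat.even_mul, Nat.div2_succ_double, Nat.div2_double.
  simpl. ring.
Qed.

(* Null sets are closed under finite union (interleave the two covers at [eps/2]). *)
Lemma null_union (E F : R -> Prop) : null_set E -> null_set F -> null_set (fun x => E x \/ F x).
Proof.
  intros HE HF eps He.
  destruct (HE (eps/2) ltac:(lra)) as [l1 [r1 [A1 [B1 C1]]]].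
  destruct (HF (eps/2) ltac:(lra)) as [l2 [r2 [A2 [B2 C2]]]].
  set (mix := fun (s t : nat -> R) k => if Nat.even k then s (Nat.div2 k) else t (Nat.div2 k)).
  exists (mix l1 l2), (mix r1 r2). split; [|split].
  - intros k; unfold mix; destruct (Nat.even k); auto.
  - intros x [Hx|Hx].
    + destruct (B1 x Hx) as [k Hk]. exists (2*k)%nat.
      unfold mix. rewrite Nat.even_mul, Nat.div2_double; auto.
    + destruct (B2 x Hx) as [k Hk]. exists (S (2*k))%nat.
      unfold mix. rewrite Nat.even_succ, Nat.odd_mul, Nat.div2_succ_double; auto.
  - intros K. apply (Rle_trans _ (sumR (fun k => mix r1 r2 k - mix l1 l2 k) (2*K))).
    + apply sumR_mono_n; [|lia].
      intros k; unfold mix; destruct (Nat.even k); [specialize (A1 (Nat.div2 k))|specialize (A2 (Nat.div2 k))]; lra.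
    + rewrite (sumR_ext _ (mix (fun j => r1 j - l1 j) (fun j => r2 j - l2 j)))
        by (intros k _; unfold mix; destruct (Nat.even k); auto).
      assert (I := sumR_interleave (fun j => r1 j - l1 j) (fun j => r2 j - l2 j) K).
      unfold mix; cbv beta in I |- *. rewrite I. specialize (C1 K); specialize (C2 K); lra.
Qed.

(** * Cousin's lemma *)

Definition fine_partition (al t : R) (G : R -> R -> R -> Prop) : Prop :=
  exists p (u c : nat -> R), u 0%nat = al /\ u p = t /\
    forall i, (i < p)%nat -> u i <= c i <= u (S i) /\ G (c i) (u i) (u (S i)).

Lemma fine_partition_extend al t s s' G :
  fine_partition al t G -> t <= s <= s' -> G s t s' -> fine_partition al s' G.
Proof.
  intros [p [u [c [H0 [Hp H]]]]] Hs HG.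
  exists (S p), (fun i => if (i <=? p)%nat then u i else s'), (fun i => if (i <? p)%nat then c i else s).
  split; [|split].
  - auto.
  - rewrite (proj2 (Nat.leb_nle (S p) p)) by lia. auto.
  - intros i Hi. destruct (Nat.eq_dec i p) as [->|Hne].
    + rewrite Nat.leb_refl, Nat.ltb_irrefl, (proj2 (Nat.leb_nle (S p) p)) by lia.
      rewrite Hp; split; [lra|auto].
    + rewrite (proj2 (Nat.leb_le i p)), (proj2 (Nat.ltb_lt i p)), (proj2 (Nat.leb_le (S i) p)) by lia.
      apply H; lia.
Qed.

(* Cousin's lemma: for every gauge on [al, be] there is a fine tagged partition.
   The supremum of the points reachable by fine partitions is [be]. *)
Lemma cousin (al be : R) (G : R -> R -> R -> Prop) : al <= be ->
  (forall x, al <= x <= be -> exists d, 0 < d /\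
     forall u v, al <= u -> u <= x -> x <= v -> v <= be -> v - u < d -> G x u v) ->
  fine_partition al be G.
Proof.
  intros Hab Hgauge.
  set (E := fun t => al <= t <= be /\ fine_partition al t G).
  assert (Hal : E al).
  { split; [lra|]. exists 0%nat, (fun _ => al), (fun _ => al). repeat split; auto; intros; lia. }
  destruct (completeness E) as [s [Hub Hlub]];
    [exists be; intros t [Ht _]; lra | exists al; auto |].
  assert (Has : al <= s) by (apply Hub; auto).
  assert (Hsb : s <= be) by (apply Hlub; intros t [Ht _]; lra).
  destruct (Hgauge s ltac:(lra)) as [d [Hd Hgd]].
  assert (Hclose : exists t, E t /\ s - d < t).
  { apply NNPP; intro Hn. assert (s <= s - d); [|lra].
    apply Hlub. intros t Et. apply Rnot_lt_le. intro Hlt. apply Hn. exists t; auto. }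
  destruct Hclose as [t [[Ht Pt] Htd]].
  assert (Hts : t <= s) by (apply Hub; split; auto).
  assert (Ps : fine_partition al s G).
  { apply (fine_partition_extend al t s s G Pt); [lra|]. apply Hgd; lra. }
  destruct (Rle_lt_or_eq_dec s be Hsb) as [Hlt|Heq]; [exfalso | subst; auto]. set (s' := Rmin be (s + d/2)).
  assert (Hs' : s < s' <= be) by (unfold s'; apply Rmin_case_strong; intros; lra).
  assert (Es' : E s').
  { split; [lra|]. apply (fine_partition_extend al s s s' G Ps); [lra|]. apply Hgd; try lra.
    unfold s'; apply Rmin_case_strong; intros; lra. }
  assert (s' <= s) by (apply Hub; auto). lra.
Qed.

(** * Mean value inequalities *)

Lemma le_of_le_plus_eps A B C : 0 <= C -> (forall e, 0 < e -> A <= B + e * (C + 1)) -> A <= B.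
Proof.
  intros HC H. apply Rnot_lt_le; intro Hlt.
  set (e := (A - B) / (C + 1) / 2).
  assert (He : 0 < e) by (unfold e; apply Rmult_lt_0_compat; [apply Rdiv_lt_0_compat|]; lra).
  specialize (H e He).
  assert (e * (C + 1) = (A - B) / 2) by (unfold e; field; lra). lra.
Qed.

Lemma deriv_local_lipschitz al be f x g K eps :
  has_deriv_within al be f x g -> Rabs g <= K -> 0 < eps ->
  exists d, 0 < d /\ forall u v, al <= u -> u <= x -> x <= v -> v <= be -> v - u < d ->
    Rabs (f v - f u) <= (K + eps) * (v - u).
Proof.
  intros Hd Hg He. destruct (Hd eps He) as [d [Hdp Hdd]]. exists d; split; auto.
  assert (Hy : forall y, al <= y <= be -> Rabs (y - x) < d ->
                 Rabs (f y - f x) <= (K + eps) * Rabs (y - x)).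
  { intros y Hy Hyx. destruct (Req_dec y x) as [->|Hne].
    - rewrite !Rminus_diag, !Rabs_R0. lra.
    - specialize (Hdd y Hy Hne Hyx).
      set (D := (f y - f x) / (y - x)) in *.
      replace (f y - f x) with (D * (y - x)) by (unfold D; field; lra).
      rewrite Rabs_mult. apply Rmult_le_compat_r; [apply Rabs_pos|].
      assert (Rabs D <= Rabs (D - g) + Rabs g)
        by (replace D with ((D - g) + g) at 1 by ring; apply Rabs_triang).
      lra. }
  intros u v Hu Hux Hxv Hv Hvu.
  assert (H1 := Hy v ltac:(lra) ltac:(rewrite Rabs_right; lra)).
  assert (H2 := Hy u ltac:(lra) ltac:(rewrite Rabs_left1; lra)).
  rewrite (Rabs_right (v - x)) in H1 by lra. rewrite (Rabs_left1 (u - x)) in H2 by lra.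
  replace (f v - f u) with ((f v - f x) - (f u - f x)) by ring.
  eapply Rle_trans; [apply Rabs_triang|]. rewrite Rabs_Ropp. lra.
Qed.

Lemma telescoping_bound (f : R -> R) K' p (u : nat -> R) (b : nat -> bool) : 0 <= K' ->
  (forall i, (i < p)%nat -> u i <= u (S i)) ->
  (forall i, (i < p)%nat -> b i = true -> Rabs (f (u (S i)) - f (u i)) <= K' * (u (S i) - u i)) ->
  Rabs (f (u p) - f (u 0%nat)) <=
    K' * (u p - u 0%nat) + sumR (fun i => if b i then 0 else Rabs (f (u (S i)) - f (u i))) p.
Proof.
  intros HK Hm Hb. induction p as [|p IH]; simpl.
  - rewrite Rminus_diag, Rabs_R0. lra.
  - assert (IH' := IH ltac:(intros; apply Hm; lia) ltac:(intros; apply Hb; auto; lia)).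
    replace (f (u (S p)) - f (u 0%nat)) with ((f (u p) - f (u 0%nat)) + (f (u (S p)) - f (u p))) by ring.
    eapply Rle_trans; [apply Rabs_triang|].
    assert (Hmp := Hm p ltac:(lia)).
    destruct (b p) eqn:Eb; [assert (H := Hb p ltac:(lia) Eb)|]; nra.
Qed.

Lemma chain_range (u : nat -> R) p : (forall i, (i < p)%nat -> u i <= u (S i)) ->
  forall i, (i <= p)%nat -> u 0%nat <= u i <= u p.
Proof.
  intros Hm i Hi. split.
  - induction i as [|i IH]; [lra|]. assert (u i <= u (S i)) by (apply Hm; lia).
    assert (u 0%nat <= u i) by (apply IH; lia). lra.
  - remember (p - i)%nat as j. revert i Hi Heqj. induction j as [|j IH]; intros i Hi Hj.
    + replace i with p by lia; lra.
    + assert (u i <= u (S i)) by (apply Hm; lia). assert (u (S i) <= u p) by (apply IH; lia). lra.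
Qed.

Lemma chain_cover_one (u : nat -> R) (sel : nat -> bool) lk rk p :
  (forall i, (i < p)%nat -> u i <= u (S i)) ->
  (forall i, (i < p)%nat -> sel i = true -> lk <= u i /\ u (S i) <= rk) ->
  forall q, (q <= p)%nat -> forall t, u q <= t ->
  sumR (fun i => if sel i then u (S i) - u i else 0) q <= Rmax 0 (Rmin t rk - lk).
Proof.
  intros Hm Hs q. induction q as [|q IH]; intros Hq t Ht; simpl; [apply Rmax_l|].
  assert (Hmq := Hm q ltac:(lia)). destruct (sel q) eqn:E.
  - destruct (Hs q ltac:(lia) E) as [H1 H2].
    assert (IH' := IH ltac:(lia) (u q) ltac:(lra)).
    rewrite Rmin_left, Rmax_right in IH' by lra.
    assert (u (S q) - lk <= Rmax 0 (Rmin t rk - lk)).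
    { eapply Rle_trans; [|apply Rmax_r]. apply Rmin_case_strong; intros; lra. }
    lra.
  - assert (IH' := IH ltac:(lia) t ltac:(lra)). lra.
Qed.

Lemma chain_cover_sum (u : nat -> R) (b : nat -> bool) (kf : nat -> nat) (l r : nat -> R) p :
  (forall i, (i < p)%nat -> u i <= u (S i)) ->
  (forall k, l k <= r k) ->
  (forall i, (i < p)%nat -> b i = false -> l (kf i) <= u i /\ u (S i) <= r (kf i)) ->
  forall K, sumR (fun i => if b i then 0 else if (kf i <? K)%nat then u (S i) - u i else 0) p
    <= sumR (fun k => r k - l k) K.
Proof.
  intros Hm Hlr Hc K. induction K as [|K IH]; simpl.
  - rewrite sumR_zero; [lra|]. intros k _. destruct (b k); auto.
  - set (sel := fun i => andb (negb (b i)) (Nat.eqb (kf i) K)).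
    rewrite (sumR_ext _ (fun i => (if b i then 0 else if (kf i <? K)%nat then u (S i) - u i else 0)
       + (if sel i then u (S i) - u i else 0))).
    2:{ intros i Hi. unfold sel. destruct (b i); simpl; [ring|].
        destruct (Nat.ltb_spec (kf i) (S K)), (Nat.ltb_spec (kf i) K), (Nat.eqb_spec (kf i) K); try lia; ring. }
    rewrite sumR_plus.
    assert (Hone : sumR (fun i => if sel i then u (S i) - u i else 0) p <= Rmax 0 (Rmin (u p) (r K) - l K)).
    { refine (chain_cover_one u sel (l K) (r K) p Hm _ p (le_n p) (u p) (Rle_refl _)).
      intros i Hi Hs. unfold sel in Hs. apply andb_prop in Hs as [Hb Hk].
      apply Nat.eqb_eq in Hk. destruct (b i) eqn:Eb; [discriminate|]. subst K. apply Hc; auto. }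
    assert (Rmax 0 (Rmin (u p) (r K) - l K) <= r K - l K).
    { specialize (Hlr K). apply Rmax_case_strong; intros; [lra|]. apply Rmin_case_strong; intros; lra. }
    lra.
Qed.

Lemma fine_partition_mod_null (al be dl : R) (N : R -> Prop) (G : R -> R -> Prop) :
  al <= be -> 0 < dl -> null_set N ->
  (forall x, al <= x <= be -> ~ N x -> exists d, 0 < d /\
     forall u v, al <= u -> u <= x -> x <= v -> v <= be -> v - u < d -> G u v) ->
  exists p (u : nat -> R) (b : nat -> bool),
    u 0%nat = al /\ u p = be /\ (forall i, (i < p)%nat -> u i <= u (S i)) /\
    (forall i, (i < p)%nat -> b i = true -> G (u i) (u (S i))) /\
    sumR (fun i => if b i then 0 else u (S i) - u i) p < dl.
Proof.
  intros Hab Hdl HN Hgauge.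
  destruct (HN (dl / 2) ltac:(lra)) as [l [r [Hlr [Hcov Hsum]]]].
  destruct (cousin al be (fun x u v => G u v \/ exists k, l k <= u /\ v <= r k) Hab)
    as [p [u [c [H0 [Hp Hpieces]]]]].
  { intros x Hx. destruct (classic (N x)) as [Nx|Nx].
    - destruct (Hcov x Nx) as [k Hk]. exists (Rmin (x - l k) (r k - x)).
      split; [apply Rmin_case_strong; intros; lra|].
      intros u v Hu Hux Hxv Hv Hvu. right. exists k.
      revert Hvu; apply Rmin_case_strong; intros; lra.
    - destruct (Hgauge x Hx Nx) as [d [Hd Hdd]]. exists d.
      split; [auto | intros; left; apply Hdd; auto]. }
  assert (Hm : forall i, (i < p)%nat -> u i <= u (S i))
    by (intros i Hi; destruct (Hpieces i Hi) as [[? ?] _]; lra).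
  (* flag each piece as fine, or as covered by the interval of index [kf i] *)
  destruct (finite_choice (true, 0%nat) (fun i y => if fst y then G (u i) (u (S i))
      else l (snd y) <= u i /\ u (S i) <= r (snd y)) p) as [F HF].
  { intros i Hi. destruct (Hpieces i Hi) as [_ [H|[k Hk]]];
      [exists (true, 0%nat) | exists (false, k)]; auto. }
  set (b := fun i => fst (F i)). set (kf := fun i => snd (F i)).
  exists p, u, b. repeat split; auto.
  { intros i Hi Hb. specialize (HF i Hi). unfold b in Hb. rewrite Hb in HF. auto. }
  destruct (finite_nat_bound kf p) as [K HK].
  assert (C := chain_cover_sum u b kf l r p Hm Hlr).
  assert (C' : sumR (fun i => if b i then 0 else if (kf i <? K)%nat then u (S i) - u i else 0) p
                 <= sumR (fun k => r k - l k) K).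
  { apply C. intros i Hi Hb. specialize (HF i Hi). unfold b in Hb. rewrite Hb in HF. auto. }
  rewrite (sumR_ext _ (fun i => if b i then 0 else u (S i) - u i)) in C'.
  2:{ intros i Hi. destruct (b i); auto. rewrite (proj2 (Nat.ltb_lt _ _) (HK i Hi)); auto. }
  specialize (Hsum K). lra.
Qed.

Lemma mvi_everywhere (f df : R -> R) (al be K : R) : al <= be ->
  (forall x, al <= x <= be -> Rabs (df x) <= K /\ has_deriv_within al be f x (df x)) ->
  Rabs (f be - f al) <= K * (be - al).
Proof.
  intros Hab Hd.
  apply (le_of_le_plus_eps _ _ (be - al)); [lra|]. intros e He.
  assert (HK : 0 <= K) by (destruct (Hd al ltac:(lra)) as [H _]; pose proof (Rabs_pos (df al)); lra).
  destruct (cousin al be (fun x u v => Rabs (f v - f u) <= (K + e) * (v - u)) Hab)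
    as [p [u [c [H0 [Hp Hpieces]]]]].
  { intros x Hx. destruct (Hd x Hx) as [H1 H2].
    exact (deriv_local_lipschitz al be f x (df x) K e H2 H1 He). }
  assert (Hm : forall i, (i < p)%nat -> u i <= u (S i))
    by (intros i Hi; destruct (Hpieces i Hi) as [[? ?] _]; lra).
  assert (T := telescoping_bound f (K + e) p u (fun _ => true) ltac:(lra) Hm
                 ltac:(intros i Hi _; apply Hpieces; auto)).
  rewrite sumR_zero, Hp, H0 in T by auto. nra.
Qed.

Lemma mvi_ae (f : R -> R) (N : R -> Prop) (al be K : R) : al <= be -> 0 <= K ->
  abs_cont_on al be f -> null_set N ->
  (forall x, al <= x <= be -> ~ N x -> exists g, Rabs g <= K /\ has_deriv_within al be f x g) ->
  Rabs (f be - f al) <= K * (be - al).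
Proof.
  intros Hab HK Hac HN Hd.
  apply (le_of_le_plus_eps _ _ (be - al)); [lra|]. intros e He.
  destruct (Hac e He) as [dl [Hdl Hacd]].
  destruct (fine_partition_mod_null al be dl N (fun u v => Rabs (f v - f u) <= (K + e) * (v - u))
              Hab Hdl HN) as [p [u [b [H0 [Hp [Hm [Hgood Hbad]]]]]]].
  { intros x Hx HNx. destruct (Hd x Hx HNx) as [g [Hg Hgd]].
    exact (deriv_local_lipschitz al be f x g K e Hgd Hg He). }
  assert (T := telescoping_bound f (K + e) p u b ltac:(lra) Hm Hgood).
  rewrite Hp, H0 in T.
  (* the bad pieces are small, so absolute continuity controls the increments of [f] on them *)
  assert (HR := chain_range u p Hm). rewrite H0, Hp in HR.
  assert (HV : sumR (fun i => Rabs (f (if b i then u i else u (S i)) - f (u i))) p < e).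
  { apply (Hacd p u (fun i => if b i then u i else u (S i))).
    - intros k Hk. assert (HR1 := HR k ltac:(lia)). assert (HR2 := HR (S k) ltac:(lia)).
      assert (Hmk := Hm k Hk). destruct (b k); lra.
    - intros k Hk. assert (Hmk := Hm k ltac:(lia)). destruct (b k); lra.
    - rewrite (sumR_ext _ (fun i => if b i then 0 else u (S i) - u i)); auto.
      intros i _. destruct (b i); ring. }
  rewrite (sumR_ext _ (fun i => if b i then 0 else Rabs (f (u (S i)) - f (u i)))) in HV.
  2:{ intros i _. destruct (b i); auto. rewrite Rminus_diag. apply Rabs_R0. }
  nra.
Qed.

Lemma deriv_restrict lo hi lo' hi' f x l : has_deriv_within lo hi f x l -> lo <= lo' -> hi' <= hi ->
  has_deriv_within lo' hi' f x l.
Proof.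
  intros H H1 H2 e He. destruct (H e He) as [d [Hd Hdd]]. exists d; split; auto.
  intros y Hy. apply Hdd; lra.
Qed.

Lemma ac_restrict lo hi lo' hi' f : abs_cont_on lo hi f -> lo <= lo' -> hi' <= hi -> abs_cont_on lo' hi' f.
Proof.
  intros H H1 H2 e He. destruct (H e He) as [d [Hd Hdd]]. exists d; split; auto.
  intros N l r Hlr. apply Hdd. intros k Hk. specialize (Hlr k Hk). lra.
Qed.

Definition between (x y t : R) : Prop := Rmin x y <= t <= Rmax x y.

Lemma slope_bound_between (f : R -> R) K x y :
  (forall al be, al <= be -> Rmin x y = al -> Rmax x y = be -> Rabs (f be - f al) <= K * (be - al)) ->
  Rabs (f y - f x) <= K * Rabs (y - x).
Proof.
  intros H. destruct (Rle_dec x y) as [Hxy|Hxy].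
  - rewrite (Rabs_right (y - x)) by lra. apply H; [lra | apply Rmin_left | apply Rmax_right]; lra.
  - rewrite Rabs_minus_sym, (Rabs_minus_sym y), (Rabs_right (x - y)) by lra.
    apply H; [lra | apply Rmin_right | apply Rmax_left]; lra.
Qed.

Lemma between_range lo hi x y t : lo <= x <= hi -> lo <= y <= hi -> between x y t -> lo <= t <= hi.
Proof. unfold between. apply Rmin_case_strong; apply Rmax_case_strong; intros; lra. Qed.

Lemma mvi_everywhere_between (f df : R -> R) lo hi K x y : lo <= x <= hi -> lo <= y <= hi ->
  (forall t, between x y t -> Rabs (df t) <= K /\ has_deriv_within lo hi f t (df t)) ->
  Rabs (f y - f x) <= K * Rabs (y - x).
Proof.
  intros Hx Hy Hd. apply slope_bound_between. intros al be Hab Hal Hbe.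
  assert (Hlo : lo <= al) by (subst al; apply Rmin_glb; lra).
  assert (Hhi : be <= hi) by (subst be; apply Rmax_lub; lra).
  apply (mvi_everywhere f df al be K Hab). intros t Ht.
  destruct (Hd t ltac:(unfold between; lra)) as [H1 H2].
  split; [auto | apply (deriv_restrict lo hi); auto].
Qed.

Lemma mvi_ae_between (f : R -> R) (N : R -> Prop) lo hi K x y : 0 <= K ->
  lo <= x <= hi -> lo <= y <= hi -> abs_cont_on lo hi f -> null_set N ->
  (forall t, between x y t -> ~ N t -> exists g, Rabs g <= K /\ has_deriv_within lo hi f t g) ->
  Rabs (f y - f x) <= K * Rabs (y - x).
Proof.
  intros HK Hx Hy Hac HN Hd. apply slope_bound_between. intros al be Hab Hal Hbe.
  assert (Hlo : lo <= al) by (subst al; apply Rmin_glb; lra).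
  assert (Hhi : be <= hi) by (subst be; apply Rmax_lub; lra).
  apply (mvi_ae f N al be K Hab HK (ac_restrict _ _ _ _ _ Hac Hlo Hhi) HN).
  intros t Ht HNt. destruct (Hd t ltac:(unfold between; lra) HNt) as [g [H1 H2]].
  exists g. split; [auto | apply (deriv_restrict lo hi); auto].
Qed.

(* An absolutely continuous function is bounded: increments over steps shorter than the
   modulus [delta] of absolute continuity (for [eps = 1]) are below [1]. *)
Lemma ac_bounded (f : R -> R) lo hi : lo <= hi -> abs_cont_on lo hi f ->
  exists B, forall x, lo <= x <= hi -> Rabs (f x) <= B.
Proof.
  intros Hlh Hac. destruct (Hac 1 Rlt_0_1) as [d [Hd Hstep]].
  assert (Hj : forall j x, lo <= x <= hi -> x - lo <= INR j * (d / 2) -> Rabs (f x - f lo) <= INR j).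
  { induction j as [|j IH]; intros x Hx Hxj.
    - simpl in Hxj |- *. replace x with lo by lra. rewrite Rminus_diag, Rabs_R0. lra.
    - rewrite S_INR in *. set (x' := Rmax lo (x - d / 2)).
      assert (Hx' : lo <= x' <= x) by (unfold x'; apply Rmax_case_strong; lra).
      assert (H1 := IH x' ltac:(lra) ltac:(unfold x'; apply Rmax_case_strong; pose proof (pos_INR j); nra)).
      assert (H2 : Rabs (f x - f x') < 1).
      { assert (Hone := Hstep 1%nat (fun _ => x') (fun _ => x)); simpl in Hone.
        rewrite !Rplus_0_l in Hone. apply Hone; intros; try lia; [lra|].
        revert Hxj; unfold x'; apply Rmax_case_strong; intros; lra. }
      replace (f x - f lo) with ((f x - f x') + (f x' - f lo)) by ring.
      eapply Rle_trans; [apply Rabs_triang|]. lra. }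
  destruct (INR_archimed (d / 2) (hi - lo) ltac:(lra)) as [j Hj'].
  exists (INR j + Rabs (f lo)). intros x Hx.
  assert (H := Hj j x Hx ltac:(lra)).
  replace (f x) with ((f x - f lo) + f lo) by ring.
  eapply Rle_trans; [apply Rabs_triang|]. lra.
Qed.

Lemma Rabs_le_0 x : Rabs x <= 0 -> x = 0.
Proof. intros H. destruct (Req_dec x 0) as [|Hx]; auto. pose proof (Rabs_pos_lt x Hx). lra. Qed.

Lemma zero_of_geometric_bound x B : (forall j, Rabs x <= B * (1/2) ^ j) -> x = 0.
Proof.
  intros H. apply NNPP; intro Hx.
  assert (HB : 0 < Rabs x <= B) by (split; [apply Rabs_pos_lt; auto | specialize (H 0%nat); simpl in H; lra]).
  destruct (pow_lt_1_zero (1/2) ltac:(rewrite Rabs_right; lra) (Rabs x / B)) as [j Hj];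
    [apply Rdiv_lt_0_compat; lra|].
  specialize (Hj j (le_n _)). specialize (H j).
  rewrite Rabs_right in Hj by (apply Rle_ge, pow_le; lra).
  apply (Rmult_lt_compat_l B) in Hj; [|lra].
  replace (B * (Rabs x / B)) with (Rabs x) in Hj by (field; lra). lra.
Qed.

(** * Uniqueness for the Cauchy problem on one edge *)

(* On a window of radius [h = 1/(M+1)]
   around a zero of [(z, z')], a bound [B] on [|z|] improves to [B/2]; iterating, [z] vanishes
   on the window, and the windows propagate the zero through [[0, a]]. *)
Section CauchyUniqueness.

Variables (q z dz : R -> R) (a M : R).
Hypothesis HM : 0 <= M.
Hypothesis Hq : null_set (fun x => 0 <= x <= a /\ M < Rabs (q x)).
Hypothesis Hsol : edge_sol q a z dz.

Let h := / (M + 1).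

Let h_pos : 0 < h.
Proof. unfold h; apply Rinv_0_lt_compat; lra. Qed.

Let in_window (e y : R) : Prop := 0 <= y <= a /\ Rabs (y - e) <= h.

Let window_between e x y t : in_window e x -> in_window e y -> between x y t -> in_window e t.
Proof.
  intros [Hx Hxe] [Hy Hye] Ht. split; [exact (between_range 0 a x y t Hx Hy Ht)|].
  revert Ht Hxe Hye. unfold between, Rabs.
  apply Rmin_case_strong; apply Rmax_case_strong; intros; repeat destruct Rcase_abs; lra.
Qed.

Let window_contraction e B : 0 <= e <= a -> z e = 0 -> dz e = 0 -> 0 <= B ->
  (forall y, in_window e y -> Rabs (z y) <= B) ->
  forall y, in_window e y -> Rabs (dz y) <= M * B * h /\ Rabs (z y) <= B / 2.
Proof.
  intros He Hze Hdze HB Hzb.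
  destruct Hsol as [Hzd [Hac Hdd]].
  assert (He' : in_window e e) by (split; [lra | rewrite Rminus_diag, Rabs_R0; lra]).
  assert (Hdz : forall y, in_window e y -> Rabs (dz y) <= M * B * h).
  { intros y Hy.
    set (N := fun x => (0 <= x <= a /\ M < Rabs (q x)) \/
                       (0 <= x <= a /\ ~ has_deriv_within 0 a dz x (q x * z x))).
    assert (L := mvi_ae_between dz N 0 a (M * B) e y ltac:(nra) ltac:(lra) (proj1 Hy) Hac
                   (null_union _ _ Hq Hdd)).
    rewrite Hdze, Rminus_0_r in L.
    assert (M * B * Rabs (y - e) <= M * B * h) by (apply Rmult_le_compat_l; [nra | apply Hy]).
    enough (Rabs (dz y) <= M * B * Rabs (y - e)) by lra.
    apply L. intros t Ht HNt. destruct (window_between e e y t He' Hy Ht) as [Ht0 Hte].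
    exists (q t * z t). split.
    - rewrite Rabs_mult. assert (Rabs (q t) <= M) by (apply Rnot_lt_le; intro; apply HNt; left; auto).
      assert (Rabs (z t) <= B) by (apply Hzb; split; auto).
      pose proof (Rabs_pos (q t)). pose proof (Rabs_pos (z t)). nra.
    - apply NNPP; intro Hn; apply HNt; right; auto. }
  intros y Hy. split; [auto|].
  assert (L := mvi_everywhere_between z dz 0 a (M * B * h) e y ltac:(lra) (proj1 Hy)).
  rewrite Hze, Rminus_0_r in L.
  assert (Hzy : Rabs (z y) <= M * B * h * Rabs (y - e)).
  { apply L. intros t Ht. assert (Hw := window_between e e y t He' Hy Ht).
    split; [apply Hdz | apply Hzd]; apply Hw. }
  assert (M * B * h * Rabs (y - e) <= M * B * h * h)
    by (apply Rmult_le_compat_l; [apply Rmult_le_pos; nra | apply Hy]).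
  assert (Hhh : M * h * h <= 1 / 2).
  { assert (h * (M + 1) = 1) by (unfold h; field; lra). nra. }
  nra.
Qed.

Let window_vanish e : 0 <= e <= a -> z e = 0 -> dz e = 0 ->
  forall y, in_window e y -> z y = 0 /\ dz y = 0.
Proof.
  intros He Hze Hdze.
  destruct Hsol as [Hzd [Hac _]].
  destruct (ac_bounded dz 0 a ltac:(lra) Hac) as [K HK].
  assert (HK0 : 0 <= K) by (specialize (HK e He); pose proof (Rabs_pos (dz e)); lra).
  assert (Hstart : forall y, in_window e y -> Rabs (z y) <= K * h).
  { intros y [Hy Hye].
    assert (L := mvi_everywhere_between z dz 0 a K e y ltac:(lra) Hy).
    rewrite Hze, Rminus_0_r in L.
    assert (K * Rabs (y - e) <= K * h) by (apply Rmult_le_compat_l; auto).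
    enough (Rabs (z y) <= K * Rabs (y - e)) by lra.
    apply L. intros t Ht. assert (Ht' := between_range 0 a e y t ltac:(lra) Hy Ht). auto. }
  assert (Hhalf : forall j y, in_window e y -> Rabs (z y) <= K * h * (1/2) ^ j).
  { induction j as [|j IH]; intros y Hy; [simpl; rewrite Rmult_1_r; auto|].
    assert (Hp : 0 <= (1/2) ^ j) by (apply pow_le; lra).
    destruct (window_contraction e (K * h * (1/2) ^ j) He Hze Hdze
                ltac:(pose proof h_pos; apply Rmult_le_pos; nra) IH y Hy) as [_ H].
    simpl. lra. }
  assert (Hz : forall y, in_window e y -> z y = 0)
    by (intros y Hy; apply (zero_of_geometric_bound _ (K * h)); intros j; auto).
  intros y Hy. split; [auto|].
  destruct (window_contraction e 0 He Hze Hdze (Rle_refl 0)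
              ltac:(intros t Ht; rewrite Hz, Rabs_R0 by auto; lra) y Hy) as [H _].
  apply Rabs_le_0. lra.
Qed.

(* The zero spreads by one window radius at each step, hence to the whole edge. *)
Lemma cauchy_zero e : 0 <= e <= a -> z e = 0 -> dz e = 0 ->
  forall x, 0 <= x <= a -> z x = 0 /\ dz x = 0.
Proof.
  intros He Hze Hdze.
  assert (Hspread : forall j x, 0 <= x <= a -> Rabs (x - e) <= INR j * h -> z x = 0 /\ dz x = 0).
  { induction j as [|j IH]; intros x Hx Hxe.
    - simpl in Hxe. rewrite Rmult_0_l in Hxe.
      replace x with e by (apply Rabs_le_0 in Hxe; lra). auto.
    - rewrite S_INR in Hxe.
      set (x' := if Rle_dec e x then Rmax e (x - h) else Rmin e (x + h)).
      assert (Hx' : 0 <= x' <= a /\ Rabs (x' - e) <= INR j * h /\ Rabs (x - x') <= h).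
      { pose proof (pos_INR j). pose proof h_pos. assert (0 <= INR j * h) by nra.
        unfold x'. destruct (Rle_dec e x).
        - rewrite Rabs_right in Hxe by lra. apply Rmax_case_strong; intros;
            repeat split; try lra; unfold Rabs; repeat destruct Rcase_abs; lra.
        - rewrite Rabs_left in Hxe by lra. apply Rmin_case_strong; intros;
            repeat split; try lra; unfold Rabs; repeat destruct Rcase_abs; lra. }
      destruct Hx' as [Hx'a [Hx'e Hxx']].
      destruct (IH x' Hx'a Hx'e) as [Hz' Hd'].
      apply (window_vanish x' Hx'a Hz' Hd' x). split; auto. }
  destruct (INR_archimed h a h_pos) as [j Hj].
  intros x Hx. apply (Hspread j x Hx). unfold Rabs; destruct Rcase_abs; lra.
Qed.

End CauchyUniqueness.

Definition ess_bounded (a : R) (q : R -> R) : Prop :=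
  exists M, null_set (fun x => 0 <= x <= a /\ M < Rabs (q x)).

Lemma edge_sol_cauchy_zero q a z dz e : ess_bounded a q -> edge_sol q a z dz ->
  0 <= e <= a -> z e = 0 -> dz e = 0 -> forall x, 0 <= x <= a -> z x = 0 /\ dz x = 0.
Proof.
  intros [M HM] Hsol. apply (cauchy_zero q z dz a (Rmax M 0)); auto; [apply Rmax_r|].
  apply (null_subset _ _ HM). intros x [Hx Hqx]. split; auto. pose proof (Rmax_l M 0). lra.
Qed.

Lemma deriv_lin lo hi f g x lf lg c1 c2 :
  has_deriv_within lo hi f x lf -> has_deriv_within lo hi g x lg ->
  has_deriv_within lo hi (fun y => c1 * f y + c2 * g y) x (c1 * lf + c2 * lg).
Proof.
  intros Hf Hg eps He.
  set (e' := eps / (Rabs c1 + Rabs c2 + 1)).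
  pose proof (Rabs_pos c1). pose proof (Rabs_pos c2).
  assert (He' : 0 < e') by (unfold e'; apply Rdiv_lt_0_compat; lra).
  assert (Hee : (Rabs c1 + Rabs c2 + 1) * e' = eps) by (unfold e'; field; lra).
  destruct (Hf e' He') as [d1 [Hd1 H1]]. destruct (Hg e' He') as [d2 [Hd2 H2]].
  exists (Rmin d1 d2). split; [apply Rmin_case; lra|].
  intros y Hy Hne Hyx.
  assert (Hy1 : Rabs (y - x) < d1) by (revert Hyx; apply Rmin_case_strong; intros; lra).
  assert (Hy2 : Rabs (y - x) < d2) by (revert Hyx; apply Rmin_case_strong; intros; lra).
  specialize (H1 y Hy Hne Hy1). specialize (H2 y Hy Hne Hy2).
  replace ((c1 * f y + c2 * g y - (c1 * f x + c2 * g x)) / (y - x) - (c1 * lf + c2 * lg))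
    with (c1 * ((f y - f x) / (y - x) - lf) + c2 * ((g y - g x) / (y - x) - lg)) by (field; lra).
  eapply Rle_lt_trans; [apply Rabs_triang|]. rewrite !Rabs_mult.
  pose proof (Rabs_pos ((f y - f x) / (y - x) - lf)). pose proof (Rabs_pos ((g y - g x) / (y - x) - lg)).
  nra.
Qed.

Lemma ac_lin lo hi f g c1 c2 : abs_cont_on lo hi f -> abs_cont_on lo hi g ->
  abs_cont_on lo hi (fun y => c1 * f y + c2 * g y).
Proof.
  intros Hf Hg eps He.
  set (e' := eps / (Rabs c1 + Rabs c2 + 1)).
  pose proof (Rabs_pos c1). pose proof (Rabs_pos c2).
  assert (He' : 0 < e') by (unfold e'; apply Rdiv_lt_0_compat; lra).
  assert (Hee : (Rabs c1 + Rabs c2 + 1) * e' = eps) by (unfold e'; field; lra).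
  destruct (Hf e' He') as [d1 [Hd1 H1]]. destruct (Hg e' He') as [d2 [Hd2 H2]].
  exists (Rmin d1 d2). split; [apply Rmin_case; lra|].
  intros N l r Hlr Hord Hs.
  assert (S1 : sumR (fun k => r k - l k) N < d1) by (revert Hs; apply Rmin_case_strong; intros; lra).
  assert (S2 : sumR (fun k => r k - l k) N < d2) by (revert Hs; apply Rmin_case_strong; intros; lra).
  specialize (H1 N l r Hlr Hord S1). specialize (H2 N l r Hlr Hord S2).
  eapply Rle_lt_trans.
  - apply (sumR_le _ (fun k => Rabs c1 * Rabs (f (r k) - f (l k)) + Rabs c2 * Rabs (g (r k) - g (l k)))).
    intros k _. rewrite <- !Rabs_mult.
    replace (c1 * f (r k) + c2 * g (r k) - (c1 * f (l k) + c2 * g (l k))) with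
      (c1 * (f (r k) - f (l k)) + c2 * (g (r k) - g (l k))) by ring. apply Rabs_triang.
  - rewrite sumR_plus, !sumR_scal. nra.
Qed.

Lemma edge_sol_lin q a z1 dz1 z2 dz2 c1 c2 : edge_sol q a z1 dz1 -> edge_sol q a z2 dz2 ->
  edge_sol q a (fun x => c1 * z1 x + c2 * z2 x) (fun x => c1 * dz1 x + c2 * dz2 x).
Proof.
  intros [A1 [B1 C1]] [A2 [B2 C2]]. split; [|split].
  - intros x Hx. apply deriv_lin; auto.
  - apply ac_lin; auto.
  - apply (null_subset _ _ (null_union _ _ C1 C2)). intros x [Hx Hn].
    apply NNPP; intro Hn2. apply Hn.
    replace (q x * (c1 * z1 x + c2 * z2 x)) with (c1 * (q x * z1 x) + c2 * (q x * z2 x)) by ring.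
    apply deriv_lin; apply NNPP; intro Hn3; apply Hn2; [left|right]; split; auto.
Qed.

Lemma edge_sol_zero q a : edge_sol q a (fun _ => 0) (fun _ => 0).
Proof.
  assert (Hd : forall x, has_deriv_within 0 a (fun _ => 0) x 0).
  { intros x eps He. exists 1; split; [lra|]. intros y _ Hne _.
    replace ((0 - 0) / (y - x) - 0) with 0 by (field; lra). rewrite Rabs_R0; lra. }
  split; [|split].
  - intros; apply Hd.
  - intros eps He. exists 1; split; [lra|]. intros. rewrite sumR_zero; [lra|].
    intros; rewrite Rminus_diag; apply Rabs_R0.
  - intros eps He. exists (fun _ => 0), (fun _ => 0). split; [intros; lra|]. split.
    + intros x [_ Hn]. exfalso. apply Hn. rewrite Rmult_0_r. apply Hd.
    + intros K. rewrite sumR_zero; [lra|]. intros; ring.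
Qed.

Lemma edge_sol_ext q a z dz z' dz' : edge_sol q a z dz ->
  (forall x, z x = z' x) -> (forall x, dz x = dz' x) -> edge_sol q a z' dz'.
Proof.
  intros H E1 E2.
  replace z' with z by (extensionality x; auto). replace dz' with dz by (extensionality x; auto). auto.
Qed.

Lemma edge_sol_sum q a (Z DZ : nat -> R -> R) (c : nat -> R) m :
  (forall k, (k < m)%nat -> edge_sol q a (Z k) (DZ k)) ->
  edge_sol q a (fun x => sumR (fun k => c k * Z k x) m) (fun x => sumR (fun k => c k * DZ k x) m).
Proof.
  induction m as [|m IH]; intros H; [apply edge_sol_zero|].
  assert (L := edge_sol_lin _ _ _ _ _ _ 1 (c m) (IH ltac:(intros; apply H; lia)) (H m ltac:(lia))).
  apply (edge_sol_ext _ _ _ _ _ _ L); intros; simpl; ring.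
Qed.

(* On an edge whose Dirichlet-Neumann problem is nontrivial, every solution satisfying the
   Neumann condition at the free end vanishes at the centre: otherwise a combination with
   the nontrivial solution would have zero Cauchy data at [a] without being zero. *)
Lemma neumann_sol_vanishes_at_centre q a y dy : ess_bounded a q ->
  edge_problem_nontrivial q a -> edge_sol q a y dy -> dy a = 0 -> y 0 = 0.
Proof.
  intros Hq [z [dz [Hz [Hz0 [Hdz [x0 [Hx0 Hzx]]]]]]] Hy Hdy.
  assert (Hza : z a <> 0).
  { intro E. apply Hzx. exact (proj1 (edge_sol_cauchy_zero q a z dz a Hq Hz ltac:(lra) E Hdz x0 Hx0)). }
  assert (L := edge_sol_lin _ _ _ _ _ _ (z a) (- y a) Hy Hz).
  destruct (edge_sol_cauchy_zero q a _ _ a Hq L ltac:(lra) ltac:(cbv beta; ring)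
              ltac:(cbv beta; rewrite Hdy, Hdz; ring) 0 ltac:(lra)) as [E _].
  cbv beta in E. rewrite Hz0 in E.
  apply (Rmult_eq_reg_l (z a)); auto. lra.
Qed.

(** * Functions on the star graph *)

Definition graph_presol (n : nat) (a : nat -> R) (Q : nat -> R -> R) (psi dpsi : nat -> R -> R) : Prop :=
  (forall i, (i < n)%nat -> edge_sol (Q i) (a i) (psi i) (dpsi i)) /\
  (forall i j, (i < n)%nat -> (j < n)%nat -> psi i 0 = psi j 0) /\
  (forall j, (j < n)%nat -> dpsi j (a j) = 0).

Definition flux (n : nat) (dpsi : nat -> R -> R) : R := sumR (fun i => dpsi i 0) n.

Lemma graph_sol_iff n a Q psi :
  graph_sol n a Q psi <-> exists dpsi, graph_presol n a Q psi dpsi /\ flux n dpsi = 0.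
Proof. unfold graph_sol, graph_presol, flux. firstorder. Qed.

Definition comb (m : nat) (c : nat -> R) (F : nat -> nat -> R -> R) : nat -> R -> R :=
  fun i x => sumR (fun k => c k * F k i x) m.

Lemma presol_comb n a Q m c (F dF : nat -> nat -> R -> R) :
  (forall k, (k < m)%nat -> graph_presol n a Q (F k) (dF k)) ->
  graph_presol n a Q (comb m c F) (comb m c dF).
Proof.
  intros H. split; [|split].
  - intros i Hi. apply (edge_sol_sum _ _ (fun k => F k i) (fun k => dF k i)).
    intros k Hk. apply (H k Hk); auto.
  - intros i j Hi Hj. apply sumR_ext. intros k Hk. destruct (H k Hk) as [_ [Hc _]]. rewrite (Hc i j); auto.
  - intros j Hj. apply sumR_zero. intros k Hk. destruct (H k Hk) as [_ [_ Hn]]. rewrite Hn; auto; ring.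
Qed.

Lemma flux_comb n m c dF : flux n (comb m c dF) = sumR (fun k => c k * flux n (dF k)) m.
Proof.
  unfold flux, comb. rewrite sumR_swap. apply sumR_ext. intros k _. apply sumR_scal.
Qed.

Lemma graph_sol_comb n a Q m c psis : (forall k, (k < m)%nat -> graph_sol n a Q (psis k)) ->
  graph_sol n a Q (comb m c psis).
Proof.
  intros H.
  destruct (finite_choice (fun _ _ => 0) (fun k dpsi => graph_presol n a Q (psis k) dpsi /\ flux n dpsi = 0) m)
    as [dps Hdps]; [intros k Hk; apply graph_sol_iff, H, Hk|].
  apply graph_sol_iff. exists (comb m c dps). split.
  - apply presol_comb. intros k Hk. apply Hdps, Hk.
  - rewrite flux_comb. apply sumR_zero. intros k Hk. rewrite (proj2 (Hdps k Hk)). ring.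
Qed.

Lemma graph_sol_centre n a Q psi i0 : graph_sol n a Q psi -> (i0 < n)%nat ->
  forall i, (i < n)%nat -> psi i 0 = psi i0 0.
Proof. intros [dpsi [_ [Hc _]]] Hi0 i Hi. apply Hc; auto. Qed.

(* A graph solution that vanishes at the centre and at the free ends of all nontrivial edges
   except possibly [is] is identically zero: every edge other than [is] carries zero Cauchy
   data at its free end, and then the Kirchhoff condition gives zero Cauchy data for [is]
   at the centre. *)
Lemma graph_sol_zero n a Q psi is :
  (forall i, (i < n)%nat -> 0 < a i) -> (forall i, (i < n)%nat -> ess_bounded (a i) (Q i)) ->
  graph_sol n a Q psi -> (forall i, (i < n)%nat -> psi i 0 = 0) ->
  (forall i, (i < n)%nat -> i <> is -> edge_problem_nontrivial (Q i) (a i) -> psi i (a i) = 0) ->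
  forall i x, (i < n)%nat -> 0 <= x <= a i -> psi i x = 0.
Proof.
  intros Ha HQ [dpsi [Hedge [_ [Hflux Hneu]]]] Hcentre Hends.
  assert (Hother : forall i, (i < n)%nat -> i <> is -> forall x, 0 <= x <= a i -> psi i x = 0 /\ dpsi i x = 0).
  { intros i Hi Hne. assert (Hai := Ha i Hi).
    assert (Hend : psi i (a i) = 0).
    { destruct (classic (edge_problem_nontrivial (Q i) (a i))) as [HP|HP]; [apply Hends; auto|].
      apply NNPP; intro Hz. apply HP. exists (psi i), (dpsi i).
      split; [auto|]. split; [auto|]. split; [auto|]. exists (a i). split; [lra|auto]. }
    apply (edge_sol_cauchy_zero _ _ _ _ (a i) (HQ i Hi) (Hedge i Hi)); auto; lra. }
  intros i x Hi Hx. destruct (Nat.eq_dec i is) as [->|Hne]; [|apply Hother; auto].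
  assert (Hd0 : dpsi is 0 = 0).
  { rewrite <- (sumR_single (fun i => dpsi i 0) n is Hi); [exact Hflux|].
    intros i' Hi' Hne. apply (Hother i' Hi' Hne). pose proof (Ha i' Hi'); lra. }
  pose proof (Ha is Hi).
  apply (edge_sol_cauchy_zero _ _ _ _ 0 (HQ is Hi) (Hedge is Hi)); auto; lra.
Qed.

Definition on_edge (i0 : nat) (z : R -> R) : nat -> R -> R :=
  fun i x => if (i =? i0)%nat then z x else 0.

Lemma presol_on_edge n a Q i0 z dz : edge_sol (Q i0) (a i0) z dz -> z 0 = 0 -> dz (a i0) = 0 ->
  graph_presol n a Q (on_edge i0 z) (on_edge i0 dz).
Proof.
  intros Hz Hz0 Hdz. unfold on_edge. split; [|split].
  - intros i Hi. destruct (Nat.eqb_spec i i0) as [->|]; [auto | apply edge_sol_zero].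
  - intros i j _ _. destruct (i =? i0)%nat, (j =? i0)%nat; rewrite ?Hz0; auto.
  - intros j _. destruct (Nat.eqb_spec j i0) as [->|]; auto.
Qed.

Lemma flux_on_edge n i0 dz : (i0 < n)%nat -> flux n (on_edge i0 dz) = dz 0.
Proof.
  intros Hi0. unfold flux, on_edge. rewrite (sumR_single _ _ i0 Hi0); [rewrite Nat.eqb_refl; auto|].
  intros i _ Hne. rewrite (proj2 (Nat.eqb_neq i i0) Hne). auto.
Qed.

Lemma comb_on_edge_eval m c (f : nat -> nat) (Z : nat -> R -> R) k0 x : (k0 < m)%nat ->
  (forall k, (k < m)%nat -> f k = f k0 -> k = k0) ->
  comb m c (fun k => on_edge (f k) (Z k)) (f k0) x = c k0 * Z k0 x.
Proof.
  intros Hk0 Hinj. unfold comb, on_edge. rewrite (sumR_single _ _ k0 Hk0).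
  - rewrite Nat.eqb_refl. auto.
  - intros k Hk Hne. destruct (Nat.eqb_spec (f k0) (f k)) as [E|]; [|ring].
    exfalso. apply Hne, Hinj; auto.
Qed.

(* If at most [m] edges ([g 0, ..., g (d-1)]) carry a nontrivial Dirichlet-Neumann problem,
   [m >= 2] graph solutions are linearly dependent: a nonzero combination can be made to
   vanish at the free ends of [g 0, ..., g (d-2)] ([d - 1 < m] conditions), or at the
   centre if [d = 0] ([1 < m] condition); it is then identically zero by [graph_sol_zero]. *)
Lemma dependent_if_few_nontrivial n a Q m psis d (g : nat -> nat) :
  (2 <= m)%nat -> (d <= m)%nat ->
  (forall i, (i < n)%nat -> 0 < a i) -> (forall i, (i < n)%nat -> ess_bounded (a i) (Q i)) ->
  (forall k, (k < m)%nat -> graph_sol n a Q (psis k)) ->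
  (forall j, (j < d)%nat -> (g j < n)%nat /\ edge_problem_nontrivial (Q (g j)) (a (g j))) ->
  (forall i, (i < n)%nat -> edge_problem_nontrivial (Q i) (a i) -> exists j, (j < d)%nat /\ g j = i) ->
  exists c, (exists k, (k < m)%nat /\ c k <> 0) /\
    forall i x, (i < n)%nat -> 0 <= x <= a i -> comb m c psis i x = 0.
Proof.
  intros Hm Hdm Ha HQ Hs Hnt Hall.
  destruct d as [|d].
  - destruct (homogeneous_system_nontrivial m 1 (fun k _ => psis k 0%nat 0) ltac:(lia)) as [c [Hc Hsys]].
    exists c. split; auto. assert (Hsol := graph_sol_comb n a Q m c psis Hs).
    apply (graph_sol_zero n a Q _ 0%nat Ha HQ Hsol).
    + intros i Hi. rewrite (graph_sol_centre _ _ _ _ 0%nat Hsol ltac:(lia) i Hi). exact (Hsys 0%nat ltac:(lia)).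
    + intros i Hi _ HP. destruct (Hall i Hi HP) as [j [Hj _]]. lia.
  - destruct (homogeneous_system_nontrivial m d (fun k j => psis k (g j) (a (g j))) ltac:(lia))
      as [c [Hc Hsys]].
    exists c. split; auto. assert (Hsol := graph_sol_comb n a Q m c psis Hs).
    destruct (Hnt d ltac:(lia)) as [His HPis].
    apply (graph_sol_zero n a Q _ (g d) Ha HQ Hsol).
    + intros i Hi. rewrite (graph_sol_centre _ _ _ _ (g d) Hsol His i Hi).
      destruct (proj1 (graph_sol_iff _ _ _ _) Hsol) as [dpsi [[Hedge [_ Hneu]] _]].
      apply (neumann_sol_vanishes_at_centre _ _ _ (dpsi (g d)) (HQ _ His) HPis); auto.
    + intros i Hi Hne HP. destruct (Hall i Hi HP) as [j [Hj <-]].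
      assert (j <> d) by (intro; subst; auto). apply (Hsys j); lia.
Qed.

(* Among finitely many numbers [w k] there is a pivot [w j] from which all are proportional
   (any nonzero one, or an arbitrary one if all vanish). *)
Lemma pivot_exists (w : nat -> R) m :
  exists j, (j < S m)%nat /\ forall k, (k < S m)%nat -> w k / w j * w j = w k.
Proof.
  destruct (classic (exists j, (j < S m)%nat /\ w j <> 0)) as [[j [Hj Hw]]|Hnone].
  - exists j. split; auto. intros; field; auto.
  - assert (Hzero : forall k, (k < S m)%nat -> w k = 0)
      by (intros k Hk; apply NNPP; intro; apply Hnone; eauto).
    exists 0%nat. split; [lia|]. intros k Hk. rewrite (Hzero 0%nat), (Hzero k) by lia. unfold Rdiv; ring.
Qed.

Lemma kron_skip j r r0 t : kron (skip j r) (skip j r0) - t * kron j (skip j r0) = kron r0 r.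
Proof.
  unfold kron. rewrite (proj2 (Nat.eqb_neq _ j) (skip_neq j r0)).
  destruct (Nat.eqb_spec (skip j r0) (skip j r)) as [E|E], (Nat.eqb_spec r r0) as [E'|E'];
    try (apply skip_inj in E; lia); subst; try ring; exfalso; auto.
Qed.

(* Conversely, [m + 1] distinct edges with nontrivial solutions [Z k] give [m] independent
   graph solutions: extending each [Z k] by zero satisfies everything but the Kirchhoff
   condition, and the combinations [Z (skip j r) - t r * Z j] with a pivot [j] restore it. *)
Lemma independent_from_nontrivial_edges n a Q m (f : nat -> nat) :
  (forall k, (k < S m)%nat -> (f k < n)%nat) ->
  (forall k l, (k < S m)%nat -> (l < S m)%nat -> f k = f l -> k = l) ->
  (forall k, (k < S m)%nat -> edge_problem_nontrivial (Q (f k)) (a (f k))) ->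
  exists psis : nat -> nat -> R -> R,
    (forall r, (r < m)%nat -> graph_sol n a Q (psis r)) /\ lin_indep n a m psis.
Proof.
  intros Hf Hinj Hnt.
  destruct (finite_choice ((fun _ : R => 0), (fun _ : R => 0), 0)
    (fun k (y : (R -> R) * (R -> R) * R) => edge_sol (Q (f k)) (a (f k)) (fst (fst y)) (snd (fst y)) /\
       fst (fst y) 0 = 0 /\ snd (fst y) (a (f k)) = 0 /\ 0 <= snd y <= a (f k) /\ fst (fst y) (snd y) <> 0) (S m))
    as [F HF].
  { intros k Hk. destruct (Hnt k Hk) as [z [dz [H1 [H2 [H3 [x [H4 H5]]]]]]]. exists (z, dz, x); simpl; auto. }
  set (Z := fun k => fst (fst (F k))). set (DZ := fun k => snd (fst (F k))). set (X := fun k => snd (F k)).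
  set (Phi := fun k => on_edge (f k) (Z k)). set (dPhi := fun k => on_edge (f k) (DZ k)).
  set (w := fun k => DZ k 0).
  assert (Hpre : forall k, (k < S m)%nat -> graph_presol n a Q (Phi k) (dPhi k))
    by (intros k Hk; destruct (HF k Hk) as [H1 [H2 [H3 _]]]; apply presol_on_edge; auto).
  assert (Hflux : forall k, (k < S m)%nat -> flux n (dPhi k) = w k) by (intros; apply flux_on_edge; auto).
  destruct (pivot_exists w m) as [j [Hj Hpiv]].
  set (C := fun r k => kron (skip j r) k - w (skip j r) / w j * kron j k).
  exists (fun r => comb (S m) (C r) Phi). split.
  - intros r Hr. apply graph_sol_iff. exists (comb (S m) (C r) dPhi).
    split; [apply presol_comb; auto|]. rewrite flux_comb.
    rewrite (sumR_ext _ (fun k => kron (skip j r) k * w k + (- (w (skip j r) / w j)) * (kron j k * w k)))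
      by (intros k Hk; rewrite Hflux by auto; unfold C; ring).
    rewrite sumR_plus, sumR_scal, !sumR_kron by (auto; apply skip_lt; auto).
    rewrite Ropp_mult_distr_l_reverse, Hpiv by (apply skip_lt; auto). ring.
  - intros b Hb r0 Hr0. set (k0 := skip j r0).
    assert (Hk0 : (k0 < S m)%nat) by (apply skip_lt; auto).
    destruct (HF k0 Hk0) as [_ [_ [_ [Hx Hzx]]]]. fold (Z k0) (X k0) in Hx, Hzx.
    (* on the edge [f k0] the [r]-th solution reduces to [kron r0 r * Z k0] *)
    assert (Hcoef : forall r, C r k0 = kron r0 r) by (intros r; apply kron_skip).
    specialize (Hb (f k0) (X k0) (Hf k0 Hk0) Hx).
    rewrite (sumR_ext _ (fun r => kron r0 r * (b r * Z k0 (X k0)))) in Hb.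
    2:{ intros r _. unfold Phi. rewrite comb_on_edge_eval, Hcoef by auto. ring. }
    rewrite sumR_kron in Hb by auto.
    apply (Rmult_eq_reg_r (Z k0 (X k0))); auto. lra.
Qed.

Theorem proposition1 (n : nat) (a : nat -> R) (Q : nat -> R -> R) (m : nat)
  (Ha : forall i, (i < n)%nat -> 0 < a i)
  (HQ : forall i, (i < n)%nat -> Linf_on (a i) (Q i))
  (Hm : (2 <= m)%nat) :
  (exists psis : nat -> nat -> R -> R,
      (forall k, (k < m)%nat -> graph_sol n a Q (psis k)) /\
      lin_indep n a m psis)
  <->
  (exists f : nat -> nat,
      (forall k, (k < S m)%nat -> (f k < n)%nat) /\
      (forall k l, (k < S m)%nat -> (l < S m)%nat -> f k = f l -> k = l) /\
      (forall k, (k < S m)%nat -> edge_problem_nontrivial (Q (f k)) (a (f k)))).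
Proof.
  assert (HQb : forall i, (i < n)%nat -> ess_bounded (a i) (Q i)) by (intros i Hi; apply (HQ i Hi)).
  split.
  - intros [psis [Hs Hind]].
    destruct (finite_enumeration (fun i => edge_problem_nontrivial (Q i) (a i)) n)
      as [d [g [Hg [Hginj Hall]]]].
    destruct (Nat.le_gt_cases d m) as [Hdm|Hdm].
    +
      exfalso. destruct (dependent_if_few_nontrivial n a Q m psis d g Hm Hdm Ha HQb Hs Hg Hall)
        as [c [[k [Hk Hck]] Hzero]].
      exact (Hck (Hind c Hzero k Hk)).
    + exists g. split; [|split]; intros; try apply Hg; try apply Hginj; lia.
  - intros [f [Hf [Hinj Hnt]]]. exact (independent_from_nontrivial_edges n a Q m f Hf Hinj Hnt).
Qed.
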